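(* For every $\mathsf{UCQ}^{\neq}$ $\tilde q$ (a Boolean union of conjunctive queries possibly containing inequality atoms $x\neq y$) and every $k\in\mathbb{N}$, there exists a finite set $\mathcal{Q}^{\neq}$ of $\mathsf{CQ}^{\neq}$ queries, together with rational numbers $\gamma_q$ ($q\in\mathcal{Q}^{\neq}$) computable from $q$ (one may take $\gamma_q=1/|\mathrm{Aut}(q)|$, where $\mathrm{Aut}(q)$ is the set of homomorphisms from $q$ to itself), such that for every database $\mathcal{D}$: $$\#\mathrm{FMS}_{\tilde q}(k,\mathcal{D})=\sum_{q\in\mathcal{Q}^{\neq}}\#\mathrm{Hom}_q(\mathcal{D})\cdot\gamma_q,$$ where $\#\mathrm{Hom}_q(\mathcal{D})$ is the number of homomorphisms from $q$ to $\mathcal{D}$. Moreover, every $q\in\mathcal{Q}^{\neq}$ has size at most quadratic in the size of $\tilde q$.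
   Context: A database is a finite set of facts $P(\vec a)$ over constants. A homomorphism from a $\mathsf{CQ}^{\neq}$ $q$ (a conjunction of relational atoms and inequality atoms over variables and constants, all variables existentially quantified) to $\mathcal{D}$ is a map $h$ from the terms of $q$ to constants, the identity on constants, such that $P(h(\vec x))\in\mathcal{D}$ for every relational atom $P(\vec x)$ of $q$ and $h(x)\neq h(y)$ for every inequality atom $x\neq y$; homomorphisms between queries are defined analogously. $\mathcal{D}\models\tilde q$ if some disjunct of $\tilde q$ has a homomorphism to $\mathcal{D}$. A minimal support of $\tilde q$ in $\mathcal{D}$ is an inclusion-minimal $S\subseteq\mathcal{D}$ with $S\models\tilde q$; $\#\mathrm{FMS}_{\tilde q}(k,\mathcal{D})$ is the number of minimal supports of $\tilde q$ in $\mathcal{D}$ of cardinality exactly $k$. *)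

From HB Require Import structures.
From mathcomp Require Import all_boot all_order all_algebra.
From mathcomp Require Import finmap.
From mathcomp Require Import boolp.

Set Implicit Arguments.
Unset Strict Implicit.
Unset Printing Implicit Defensive.

Local Open Scope fset_scope.

Definition term := (nat + nat)%type.
Definition TVar (x : nat) : term := inl x.
Definition TCst (c : nat) : term := inr c.

(* A relational atom P(t_1,...,t_n): relation symbol (a nat) and term tuple. *)
Definition ratom := (nat * seq term)%type.
(* An inequality atom t1 <> t2. *)
Definition natom := (term * term)%type.

(* A CQ^{neq}: a conjunction of relational atoms and inequality atoms, all
   variables existentially quantified (Boolean query). *)
Definition cq := (seq ratom * seq natom)%type.
Definition ratoms (q : cq) : seq ratom := q.1.
Definition natoms (q : cq) : seq natom := q.2.

(* A UCQ^{neq}: a finite disjunction of CQ^{neq}s. *)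
Definition ucq := seq cq.

(* A fact P(a_1,...,a_n) over constants, and a database = finite set of facts. *)
Definition fact := (nat * seq nat)%type.
Definition database := {fset fact}.

Definition tvars (t : term) : seq nat :=
  match t with inl x => [:: x] | inr _ => [::] end.
Definition vars (q : cq) : seq nat :=
  undup (flatten [seq flatten (map tvars a.2) | a <- ratoms q]
         ++ flatten [seq tvars p.1 ++ tvars p.2 | p <- natoms q]).

Definition tcsts (t : term) : seq nat :=
  match t with inl _ => [::] | inr c => [:: c] end.
Definition csts (q : cq) : seq nat :=
  undup (flatten [seq flatten (map tcsts a.2) | a <- ratoms q]
         ++ flatten [seq tcsts p.1 ++ tcsts p.2 | p <- natoms q]).

Definition terms (q : cq) : seq term := map TVar (vars q) ++ map TCst (csts q).

Definition tmap (T : Type) (emb : nat -> T) (h : nat -> T) (t : term) : T :=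
  match t with inl x => h x | inr c => emb c end.

Definition is_hom (T : eqType) (emb : nat -> T) (tgt : pred (nat * seq T))
    (h : nat -> T) (q : cq) : bool :=
  all (fun a => tgt (a.1, map (tmap emb h) a.2)) (ratoms q)
  && all (fun p => tmap emb h p.1 != tmap emb h p.2) (natoms q).

Definition hom_db (h : nat -> nat) (q : cq) (D : database) : bool :=
  @is_hom nat id (fun f => f \in D) h q.

Definition hom_q (h : nat -> term) (q q' : cq) : bool :=
  @is_hom _ TCst (fun a => a \in ratoms q') h q.

Definition models (D : database) (Q : ucq) : Prop :=
  exists2 q, q \in Q & exists h : nat -> nat, hom_db h q D.

Definition min_support (Q : ucq) (D S : database) : Prop :=
  [/\ S `<=` D, models S Q & forall S', S' `<` S -> ~ models S' Q].

Definition FMS (Q : ucq) (k : nat) (D : database) : nat :=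
  #|` [fset S in fpowerset D | `[< min_support Q D S >] && (#|` S| == k)] |.

Fixpoint tuples (T : Type) (A : seq T) (n : nat) : seq (seq T) :=
  match n with
  | 0 => [:: [::]]
  | n'.+1 => [seq x :: l | x <- A, l <- tuples A n']
  end.

Definition of_list (T : Type) (d : T) (q : cq) (l : seq T) : nat -> T :=
  fun x => nth d l (index x (vars q)).

Definition adom (D : database) : seq nat :=
  undup (flatten [seq f.2 | f <- enum_fset D]).

(* A query is safe if each of its variables occurs in a relational atom;
   then every homomorphism into D maps variables into adom D and every
   endomorphism maps variables into terms q, so the counts below are the
   numbers of all homomorphisms (homomorphisms being determined by their
   values on the variables). *)
Definition safe (q : cq) : bool :=
  all (fun x => x \in flatten [seq flatten (map tvars a.2) | a <- ratoms q])
      (vars q).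

Definition hom_count (q : cq) (D : database) : nat :=
  count (fun l => hom_db (of_list 0 q l) q D) (tuples (adom D) (size (vars q))).

Definition aut_count (q : cq) : nat :=
  count (fun l => hom_q (of_list (TCst 0) q l) q q)
        (tuples (terms q) (size (vars q))).

(* Size of a CQ: for each relational atom, 1 + its arity; for each
   inequality atom, 3 (one symbol and two terms). *)
Definition cq_size (q : cq) : nat :=
  \sum_(a <- ratoms q) (size a.2).+1 + 3 * size (natoms q).

Definition ucq_size (Q : ucq) : nat := \sum_(q <- Q) cq_size q.

(* Every minimal support S of size k is an image h(q0) of a disjunct q0, so it
   has at most |q~| facts and at most |q~| elements outside the constants cs of
   q~.  Replacing these elements by variables turns S into a "canonical" CQ^neq
   with k atoms, whose inequality atoms force its variables to take pairwise
   distinct values outside cs; the images of such a query under these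
   assignments are exactly the renamings of S fixing cs, which are again minimal
   supports.  For a canonical q the homomorphisms into D with a given image are
   the compositions of one of them with the automorphisms of q, so
   #Hom_q(D) = |Aut(q)| * #{S <= D | S is an image of q}.  Summing over one
   canonical query per renaming class gives #FMS. *)

From mathcomp Require Import all_boot all_order all_algebra.
From mathcomp Require Import finmap boolp zify.

Set Implicit Arguments.
Unset Strict Implicit.
Unset Printing Implicit Defensive.

Local Open Scope fset_scope.

Lemma mem_tuples (T : eqType) (A : seq T) n l :
  (l \in tuples A n) = (size l == n) && all (mem A) l.
Proof.
elim: n l => [|n IH] [|x l] //=.
  by apply/negbTE/allpairsP => -[[y l'] /= [_ _]].
apply/allpairsP/idP => [[[y l'] /= [Hy Hl [-> ->]]]|/and3P[Hs Hx Hl]].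
  by move: Hl; rewrite IH eqSS => /andP[-> ->]; rewrite Hy.
by exists (x, l) => /=; rewrite IH -eqSS Hs Hl Hx.
Qed.

Lemma uniq_tuples (T : eqType) (A : seq T) n : uniq A -> uniq (tuples A n).
Proof.
move=> uA; elim: n => [|n IH] //=.
by apply: allpairs_uniq => // -[x l] [y l'] _ _ /= [-> ->].
Qed.

Lemma sum_nat_bool (T : Type) (b : pred T) (s : seq T) :
  \sum_(x <- s) (b x : nat) = count b s.
Proof. by elim: s => [|x s IH]; rewrite ?big_nil ?big_cons ?IH. Qed.

Lemma count_sum_fibers (T U : eqType) (p : pred T) (f : T -> U) s (E : seq U) :
  uniq E -> {in s, forall x, p x -> f x \in E} ->
  count p s = \sum_(e <- E) count (fun x => p x && (f x == e)) s.
Proof.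
move=> uE; elim: s => [|x s IH] fE /=; first by rewrite big1_seq.
rewrite big_split /= -IH; last by move=> y ys; apply: fE; rewrite inE ys orbT.
suff -> : \sum_(e <- E) (p x && (f x == e) : nat) = p x by [].
case px: (p x); last by rewrite big1.
rewrite sum_nat_bool (eq_count (a2 := pred1 (f x))) => [|e]; last by rewrite /= eq_sym.
by rewrite count_uniq_mem // fE // inE eqxx.
Qed.

Lemma count_uniq_eq1 (T : eqType) (p : pred T) s : uniq s ->
  {in s &, forall x y, p x -> p y -> x = y} -> has p s -> count p s = 1.
Proof.
move=> us p_inj /hasP[x xs px]; apply/anti_leq/andP; split; last first.
  by rewrite -has_count; apply/hasP; exists x.
rewrite -size_filter (@uniq_leq_size _ _ [:: x]) ?filter_uniq // => y.
by rewrite mem_filter inE => /andP[py ys]; rewrite (p_inj y x).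
Qed.

Lemma size_bij_in (T U : eqType) (s : seq T) (t : seq U) f g :
  uniq s -> uniq t -> {in s, forall x, f x \in t} -> {in t, forall y, g y \in s} ->
  {in s, cancel f g} -> {in t, cancel g f} -> size s = size t.
Proof.
move=> us ut fst gts fK gK; apply/anti_leq/andP; split.
  rewrite -(size_map f) uniq_leq_size ?(map_inj_in_uniq (can_in_inj fK)) //.
  by move=> y /mapP[x xs ->]; apply: fst.
rewrite -(size_map g) uniq_leq_size ?(map_inj_in_uniq (can_in_inj gK)) //.
by move=> x /mapP[y yt ->]; apply: gts.
Qed.

Lemma leq_sum_undup (T : eqType) (F : T -> nat) (s : seq T) :
  \sum_(x <- undup s) F x <= \sum_(x <- s) F x.
Proof.
elim: s => [|x s IH] //=; rewrite big_cons; case: ifP => _.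
  exact: leq_trans IH (leq_addl _ _).
by rewrite big_cons leq_add2l.
Qed.

Lemma leq_sum_mem (T : eqType) (F : T -> nat) (s : seq T) x :
  x \in s -> F x <= \sum_(y <- s) F y.
Proof.
elim: s => //= y s IH; rewrite inE big_cons => /orP[/eqP->|/IH H].
  exact: leq_addr.
exact: leq_trans H (leq_addl _ _).
Qed.

Lemma size_flatten_map_le (A B : Type) (f : A -> seq B) (g : A -> nat) s :
  (forall x, size (f x) <= g x) -> size (flatten (map f s)) <= \sum_(x <- s) g x.
Proof.
move=> fg; elim: s => [|x s IH]; rewrite ?big_nil ?big_cons //=.
by rewrite size_cat leq_add.
Qed.

Lemma uniq_vars q : uniq (vars q). Proof. exact: undup_uniq. Qed.

Lemma of_list_map (T : Type) (d : T) q f x : x \in vars q ->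
  of_list d q (map f (vars q)) x = f x.
Proof. by move=> xV; rewrite /of_list (nth_map x) ?index_mem ?nth_index. Qed.

Lemma map_of_list (T : Type) (d : T) q l : size l = size (vars q) ->
  map (of_list d q l) (vars q) = l.
Proof.
move=> sl; apply: (@eq_from_nth _ d); first by rewrite size_map sl.
move=> i; rewrite size_map => iV.
by rewrite (nth_map 0) // /of_list index_uniq // uniq_vars.
Qed.

Lemma mem_tvars x t : (x \in tvars t) = (t == TVar x).
Proof. by case: t => [y|c] //=; rewrite inE /TVar; apply/eqP/eqP => [->|[->]]. Qed.

Lemma mem_tcsts c t : (c \in tcsts t) = (t == TCst c).
Proof. by case: t => [y|d] //=; rewrite inE /TCst; apply/eqP/eqP => [->|[->]]. Qed.

Lemma mem_vars_ratom q a x : a \in ratoms q -> TVar x \in a.2 -> x \in vars q.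
Proof.
move=> aq xa; rewrite /vars mem_undup mem_cat; apply/orP; left.
apply/flatten_mapP; exists a => //; apply/flatten_mapP; exists (TVar x) => //.
by rewrite mem_tvars.
Qed.

Lemma mem_vars_natom q p x : p \in natoms q -> (p.1 == TVar x) || (p.2 == TVar x) ->
  x \in vars q.
Proof.
move=> pq xp; rewrite /vars mem_undup mem_cat; apply/orP; right.
by apply/flatten_mapP; exists p => //; rewrite mem_cat !mem_tvars.
Qed.

Lemma eq_tmap (T : Type) (emb : nat -> T) h h' t :
  (forall x, t = TVar x -> h x = h' x) -> tmap emb h t = tmap emb h' t.
Proof. by case: t => [x|c] //= E; apply: E. Qed.

Lemma eq_in_is_hom (T : eqType) emb tgt (h h' : nat -> T) q :
  {in vars q, h =1 h'} -> is_hom emb tgt h q = is_hom emb tgt h' q.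
Proof.
move=> E; rewrite /is_hom; congr andb.
  apply: eq_in_all => a aq /=; congr (tgt (_, _)); apply/eq_in_map => t ta.
  by apply: eq_tmap => x tx; apply: E; apply: (mem_vars_ratom aq); rewrite -tx.
apply: eq_in_all => p pq /=; congr negb; congr eq_op; apply: eq_tmap => x tx;
  by apply: E; apply: (mem_vars_natom pq); rewrite tx eqxx ?orbT.
Qed.

Definition inst (h : nat -> nat) (a : ratom) : fact := (a.1, map (tmap id h) a.2).
Definition img (h : nat -> nat) (q : cq) : database := [fset f in map (inst h) (ratoms q)].

Definition sat_neq (T : eqType) (emb : nat -> T) (h : nat -> T) (q : cq) : bool :=
  all (fun p => tmap emb h p.1 != tmap emb h p.2) (natoms q).

Lemma in_img h q f : (f \in img h q) = (f \in map (inst h) (ratoms q)).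
Proof. by rewrite in_fset. Qed.

Lemma hom_dbE h q D : hom_db h q D = (img h q `<=` D) && sat_neq id h q.
Proof.
rewrite /hom_db /is_hom; congr andb.
apply/allP/fsubsetP => [H f|H a aq]; last by apply: H; rewrite in_img map_f.
by rewrite in_img => /mapP[a aq ->]; apply: H.
Qed.

Lemma eq_in_inst q h h' a : {in vars q, h =1 h'} -> a \in ratoms q ->
  inst h a = inst h' a.
Proof.
move=> E aq; congr (_, _); apply/eq_in_map => t ta.
by apply: eq_tmap => x tx; apply: E; apply: (mem_vars_ratom aq); rewrite -tx.
Qed.

Lemma eq_in_img h h' q : {in vars q, h =1 h'} -> img h q = img h' q.
Proof.
move=> E; apply/fsetP => f; rewrite !in_img; congr (_ \in _).
by apply/eq_in_map => a; apply: eq_in_inst.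
Qed.

Lemma in_adom (D : database) (f : fact) n : f \in D -> n \in f.2 -> n \in adom D.
Proof. by move=> fD nf; rewrite /adom mem_undup; apply/flatten_mapP; exists f. Qed.

(** * Renaming constants *)

Definition ucq_csts (Qt : ucq) : seq nat := flatten (map csts Qt).

Definition minimal_model (Qt : ucq) (S : database) : Prop :=
  models S Qt /\ forall S', S' `<` S -> ~ models S' Qt.

Definition rename_fact (g : nat -> nat) (f : fact) : fact := (f.1, map g f.2).
Definition rename_db (g : nat -> nat) (S : database) : database :=
  [fset f in map (rename_fact g) S].

Lemma mem_ucq_csts_ratom Qt q a c : q \in Qt -> a \in ratoms q -> TCst c \in a.2 ->
  c \in ucq_csts Qt.
Proof.
move=> qQ aq ca; apply/flatten_mapP; exists q => //.
rewrite /csts mem_undup mem_cat; apply/orP; left.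
apply/flatten_mapP; exists a => //; apply/flatten_mapP; exists (TCst c) => //.
by rewrite mem_tcsts.
Qed.

Lemma mem_ucq_csts_natom Qt q p c : q \in Qt -> p \in natoms q ->
  (p.1 == TCst c) || (p.2 == TCst c) -> c \in ucq_csts Qt.
Proof.
move=> qQ pq cp; apply/flatten_mapP; exists q => //.
rewrite /csts mem_undup mem_cat; apply/orP; right.
by apply/flatten_mapP; exists p => //; rewrite mem_cat !mem_tcsts.
Qed.

Lemma in_rename_db g S f : (f \in rename_db g S) = (f \in map (rename_fact g) S).
Proof. by rewrite in_fset. Qed.

Lemma rename_dbK g g' : cancel g g' -> cancel (rename_db g) (rename_db g').
Proof.
move=> K S; have KF : cancel (rename_fact g) (rename_fact g').
  by move=> [r ns]; rewrite /rename_fact /= mapK.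
apply/fsetP => f; rewrite in_rename_db; apply/mapP/idP => [[f']|fS].
  by rewrite in_rename_db => /mapP[f'' f''S ->] ->; rewrite KF.
by exists (rename_fact g f); rewrite ?KF // in_rename_db map_f.
Qed.

Lemma rename_dbS g S1 S2 : S1 `<=` S2 -> rename_db g S1 `<=` rename_db g S2.
Proof.
move=> /fsubsetP S12; apply/fsubsetP => f; rewrite !in_rename_db => /mapP[f' f'S ->].
by rewrite map_f // S12.
Qed.

Lemma models_rename Qt g g' S : cancel g g' -> {in ucq_csts Qt, g =1 id} ->
  models S Qt -> models (rename_db g S) Qt.
Proof.
move=> K gid [q qQ [h]] /andP[/allP hA /allP hN].
exists q => //; exists (g \o h); apply/andP; split.
  apply/allP => a aq /=; rewrite in_rename_db.
  have -> : map (tmap id (g \o h)) a.2 = map g (map (tmap id h) a.2).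
    rewrite -map_comp; apply/eq_in_map => -[x|c] //= ca.
    by rewrite gid //; apply: (mem_ucq_csts_ratom qQ aq).
  exact: (map_f (rename_fact g) (hA a aq)).
apply/allP => p pq /=.
have gE t : (t == p.1) || (t == p.2) -> tmap id (g \o h) t = g (tmap id h t).
  case: t => [x|c] //= ct; rewrite gid //; apply: (mem_ucq_csts_natom qQ pq).
  by case/orP: ct => /eqP <-; rewrite eqxx ?orbT.
by rewrite !gE ?eqxx ?orbT // (inj_eq (can_inj K)) hN.
Qed.

Lemma minimal_model_rename Qt g g' S : cancel g g' -> cancel g' g ->
  {in ucq_csts Qt, g =1 id} -> minimal_model Qt S -> minimal_model Qt (rename_db g S).
Proof.
move=> K K' gid [mS minS]; split; first exact: (models_rename K gid).
have g'id : {in ucq_csts Qt, g' =1 id} by move=> c cQ; rewrite -{1}(gid c cQ) K.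
move=> S' ltS' mS'; apply: (minS (rename_db g' S')); last exact: (models_rename K' g'id).
rewrite fproperEneq; apply/andP; split.
  by apply: contraTneq ltS' => <-; rewrite rename_dbK // fproperEneq eqxx.
by rewrite -(rename_dbK K S); apply/rename_dbS/fproper_sub.
Qed.

Definition swap_seq (a b : seq nat) (n : nat) : nat :=
  if n \in a then nth 0 b (index n a) else if n \in b then nth 0 a (index n b) else n.

Lemma swap_seqK a b : uniq a -> uniq b -> size a = size b ->
  {in a, forall x, x \notin b} -> involutive (swap_seq a b).
Proof.
move=> ua ub sab dis n; case na: (n \in a).
  have nb : nth 0 b (index n a) \in b by rewrite mem_nth // -sab index_mem na.
  have nb' : (nth 0 b (index n a) \in a) = false.
    by apply/negbTE/negP => /dis; rewrite nb.
  by rewrite [swap_seq a b n]/swap_seq na /swap_seq nb' nb index_uniq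
    ?nth_index // -sab index_mem.
case nb: (n \in b); last by rewrite [swap_seq a b n]/swap_seq na nb /swap_seq na nb.
have na' : nth 0 a (index n b) \in a by rewrite mem_nth // sab index_mem.
by rewrite [swap_seq a b n]/swap_seq na nb /swap_seq na' index_uniq
  ?nth_index // sab index_mem.
Qed.

Lemma swap_seq_nth a b i : uniq a -> i < size a -> swap_seq a b (nth 0 a i) = nth 0 b i.
Proof. by move=> ua ia; rewrite /swap_seq mem_nth // index_uniq. Qed.

Lemma swap_seq_id a b n : n \notin a -> n \notin b -> swap_seq a b n = n.
Proof. by rewrite /swap_seq => /negbTE -> /negbTE ->. Qed.

(* Swapping [map h1 V] with a fresh block [B], then [B] with [map h2 V], yields
   a bijection of [nat] sending [h1] to [h2] on [V] and fixing [cs]. *)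
Lemma exists_renaming (V cs : seq nat) (h1 h2 : nat -> nat) : uniq V ->
  {in V &, injective h1} -> {in V &, injective h2} ->
  {in V, forall x, h1 x \notin cs} -> {in V, forall x, h2 x \notin cs} ->
  exists g g', [/\ cancel g g', cancel g' g, {in cs, g =1 id} &
                 {in V, forall x, g (h1 x) = h2 x}].
Proof.
move=> uV i1 i2 c1 c2.
set A := map h1 V; set C := map h2 V.
set N := (\max_(x <- A ++ C ++ cs) x).+1.
set B := iota N (size V).
have ltN x : x \in A ++ C ++ cs -> x < N by move=> xin; rewrite ltnS leq_bigmax_seq.
have geN x : x \in B -> N <= x by rewrite mem_iota => /andP[].
have uA : uniq A by rewrite map_inj_in_uniq.
have uC : uniq C by rewrite map_inj_in_uniq.
have dAB : {in A, forall x, x \notin B}.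
  by move=> x xA; apply/negP => /geN; rewrite leqNgt ltN // mem_cat xA.
have dBC : {in B, forall x, x \notin C}.
  by move=> x /geN; apply: contraTN => xC; rewrite -ltnNge ltN // !mem_cat xC orbT.
have sAB : size A = size B by rewrite size_map size_iota.
have sBC : size B = size C by rewrite size_map size_iota.
have K1 := swap_seqK uA (iota_uniq _ _) sAB dAB.
have K2 := swap_seqK (iota_uniq _ _) uC sBC dBC.
exists (swap_seq B C \o swap_seq A B), (swap_seq A B \o swap_seq B C); split.
- by move=> n /=; rewrite K2 K1.
- by move=> n /=; rewrite K1 K2.
- move=> c ccs /=.
  have cA : c \notin A by apply/mapP => -[x xV cx]; move: (c1 x xV); rewrite -cx ccs.
  have cC : c \notin C by apply/mapP => -[x xV cx]; move: (c2 x xV); rewrite -cx ccs.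
  have cB : c \notin B by apply/negP => /geN; rewrite leqNgt ltN // !mem_cat ccs !orbT.
  by rewrite (swap_seq_id cA cB) (swap_seq_id cB cC).
- move=> x xV /=.
  have -> : h1 x = nth 0 A (index x V) by rewrite (nth_map 0) ?index_mem ?nth_index.
  rewrite swap_seq_nth ?size_map ?index_mem // swap_seq_nth ?iota_uniq ?size_iota ?index_mem //.
  by rewrite (nth_map 0) ?index_mem ?nth_index.
Qed.

(** * Canonical queries *)

Definition wf_term (V cs : seq nat) (t : term) : bool :=
  match t with inl x => x \in V | inr c => c \in cs end.

(* The third field quantifies over all targets so that it applies both to
   assignments into databases and to endomorphisms. *)
Definition canonical (cs : seq nat) (q : cq) : Prop :=
  [/\ uniq (ratoms q),
      {in ratoms q, forall a, all (wf_term (vars q) cs) a.2},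
      (forall (T : eqType) (emb : nat -> T) h, sat_neq emb h q <->
         {in vars q &, injective h} /\ {in vars q, forall x c, c \in cs -> h x != emb c}),
      (forall x, x \in vars q -> exists2 a, a \in ratoms q & TVar x \in a.2) &
      {subset csts q <= cs}].

Lemma canonical_satP cs q h : canonical cs q ->
  sat_neq id h q <-> {in vars q &, injective h} /\ {in vars q, forall x, h x \notin cs}.
Proof.
case=> _ _ satE _ _; rewrite satE; split=> -[hi hc]; split=> // x xV.
  by apply/negP => /(hc x xV); rewrite eqxx.
by move=> c cc; apply: contraNneq (hc x xV) => ->.
Qed.

Lemma canonical_safe cs q : canonical cs q -> safe q.
Proof.
case=> _ _ _ safe _; apply/allP => x /safe[a aq xa].
by apply/flatten_mapP; exists a => //; apply/flatten_mapP; exists (TVar x); rewrite ?mem_tvars.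
Qed.

Lemma inj_in_map_all (A B : eqType) (P : pred A) (f : A -> B) s1 s2 :
  {in P &, injective f} -> all P s1 -> all P s2 -> map f s1 = map f s2 -> s1 = s2.
Proof.
move=> inj; elim: s1 s2 => [|x s1 IH] [|y s2] //= /andP[Px P1] /andP[Py P2] [fxy E].
by rewrite (inj x y) // (IH s2).
Qed.

Lemma tmap_inj_in V cs (h : nat -> nat) : {in V &, injective h} ->
  {in V, forall x, h x \notin cs} -> {in wf_term V cs &, injective (tmap id h)}.
Proof.
move=> hi hc t1 t2; rewrite !unfold_in.
case: t1 => [x|c]; case: t2 => [y|d] /= t1V t2V E.
- by rewrite (hi x y t1V t2V E).
- by move: (hc x t1V); rewrite E t2V.
- by move: (hc y t2V); rewrite -E t1V.
- by rewrite E.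
Qed.

Lemma inst_inj cs q h a b : canonical cs q -> sat_neq id h q ->
  all (wf_term (vars q) cs) a.2 -> all (wf_term (vars q) cs) b.2 ->
  inst h a = inst h b -> a = b.
Proof.
move=> cq /(canonical_satP _ cq) [hi hc].
case: a => r ts; case: b => r' ts' /= aW bW [-> E].
by rewrite (inj_in_map_all (tmap_inj_in hi hc) aW bW E).
Qed.

Lemma card_img cs q h : canonical cs q -> sat_neq id h q -> #|` img h q| = size (ratoms q).
Proof.
move=> cq hsat; rewrite /img card_fseq undup_id ?size_map //.
have [uq qW _ _ _] := cq; rewrite map_inj_in_uniq // => a b aq bq.
by apply: (inst_inj cq hsat); apply: qW.
Qed.

Definition subst (s : nat -> term) (a : ratom) : ratom := (a.1, map (tmap TCst s) a.2).

Lemma inst_subst h s a : inst h (subst s a) = inst (tmap id h \o s) a.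
Proof. by rewrite /inst /= -map_comp; congr (_, _); apply/eq_map => -[x|c]. Qed.

Lemma uniq_terms q : uniq (terms q).
Proof.
rewrite /terms cat_uniq !map_inj_uniq ?uniq_vars ?undup_uniq => [|? ? []|? ? []] //.
by rewrite andbT /=; apply/hasP => -[t /mapP[c _ ->] /mapP[x _]].
Qed.

Lemma endo_inj cs q s : canonical cs q -> hom_q s q q -> {in vars q &, injective s}.
Proof. by case=> _ _ satE _ _ /andP[_ /satE[]]. Qed.

(* Constants of [cs] are excluded by the inequality atoms, and any other term
   would produce an atom outside [q]. *)
Lemma endo_var cs q s x : canonical cs q -> hom_q s q q -> x \in vars q ->
  exists2 v, v \in vars q & s x = TVar v.
Proof.
move=> cq; have [_ qW satE safe _] := cq.
move=> /andP[/allP sA /satE[_ sc]] xV; have [a aq xa] := safe x xV.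
have : s x \in (subst s a).2 by apply: (map_f (tmap TCst s) xa).
move/(allP (qW _ (sA a aq))); case E: (s x) => [v|c] /=; first by exists v.
by move=> cc; move: (sc x xV c cc); rewrite E eqxx.
Qed.

Lemma sat_endo_comp cs q h s : canonical cs q -> sat_neq id h q -> hom_q s q q ->
  sat_neq id (tmap id h \o s) q.
Proof.
move=> cq /(canonical_satP _ cq) [hi hc] endo; apply/(canonical_satP _ cq); split.
  move=> x y xV yV; have [v vV ev] := endo_var cq endo xV.
  have [w wV ew] := endo_var cq endo yV.
  by rewrite /= ev ew /= => /hi-/(_ vV wV) vw; apply: (endo_inj cq endo); rewrite // ev ew vw.
by move=> x xV /=; have [v vV ->] := endo_var cq endo xV; apply: hc.
Qed.

Lemma img_endo_comp cs q h s : canonical cs q -> sat_neq id h q -> hom_q s q q ->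
  img (tmap id h \o s) q = img h q.
Proof.
move=> cq hsat endo; have hssat := sat_endo_comp cq hsat endo.
apply/eqP; rewrite eqEfcard (card_img cq hsat) (card_img cq hssat) leqnn andbT.
have /andP[/allP sA _] := endo.
by apply/fsubsetP => f; rewrite !in_img => /mapP[a aq ->]; rewrite -inst_subst map_f ?sA.
Qed.

Definition preim (f : nat -> nat) (V : seq nat) (y : nat) : nat :=
  nth 0 V (index y (map f V)).

Lemma preimK f V y : y \in map f V -> f (preim f V y) = y /\ preim f V y \in V.
Proof.
move=> yV; have iV : index y (map f V) < size V by rewrite -(size_map f) index_mem.
by rewrite /preim -(nth_map 0 0) ?nth_index ?mem_nth.
Qed.

Lemma preim_inj f V x : {in V &, injective f} -> x \in V -> preim f V (f x) = x.
Proof.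
move=> fi xV; have fxV : f x \in map f V by apply: map_f.
by have [E pV] := preimK fxV; apply: fi.
Qed.

Lemma img_vars cs q h h' x : canonical cs q -> sat_neq id h q ->
  img h q = img h' q -> x \in vars q -> h x \in map h' (vars q).
Proof.
move=> cq /(canonical_satP _ cq) [_ hc] E xV; have [_ qW _ safe _] := cq.
have [a aq xa] := safe x xV.
have : inst h a \in img h' q by rewrite -E in_img map_f.
rewrite in_img => /mapP[b bq /(congr1 snd) /= Eab].
have : h x \in map (tmap id h') b.2 by rewrite -Eab (map_f (tmap id h) xa).
case/mapP => -[v|c] tb /= hx; first by rewrite hx map_f // (mem_vars_ratom bq tb).
by move: (hc x xV) (allP (qW b bq) _ tb); rewrite hx /= => /negP.
Qed.

Lemma endo_of_img cs q h h0 : canonical cs q -> sat_neq id h0 q -> sat_neq id h q ->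
  img h q = img h0 q -> hom_q (TVar \o preim h0 (vars q) \o h) q q.
Proof.
move=> cq h0sat hsat E; have [_ qW satE _ _] := cq.
have [hi _] := (canonical_satP _ cq).1 hsat.
have hK x : x \in vars q ->
    h0 (preim h0 (vars q) (h x)) = h x /\ preim h0 (vars q) (h x) \in vars q.
  by move=> xV; apply/preimK/(img_vars cq hsat E xV).
apply/andP; split.
  apply/allP => a aq; change (subst (TVar \o preim h0 (vars q) \o h) a \in ratoms q).
  have : inst h a \in img h0 q by rewrite -E in_img map_f.
  rewrite in_img => /mapP[b bq Eb].
  suff -> : subst (TVar \o preim h0 (vars q) \o h) a = b by [].
  apply: (inst_inj cq h0sat); last 1 first.
  - by rewrite inst_subst -Eb; apply: eq_in_inst aq => x /hK[].
  - apply/allP => t /mapP[[x|c] ta ->] /=; first by case: (hK x (mem_vars_ratom aq ta)).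
    exact: (allP (qW a aq) _ ta).
  - exact: qW.
apply/satE; split=> // x y xV yV [Exy]; apply: hi => //.
by rewrite -(hK x xV).1 Exy (hK y yV).1.
Qed.

Definition aut_tuples (q : cq) : seq (seq term) :=
  [seq sg <- tuples (terms q) (size (vars q)) | hom_q (of_list (TCst 0) q sg) q q].

Definition onto_tuples (q : cq) (D S : database) : seq (seq nat) :=
  [seq l <- tuples (adom D) (size (vars q)) |
     hom_db (of_list 0 q l) q D && (img (of_list 0 q l) q == S)].

Lemma aut_tuplesP q sg : sg \in aut_tuples q ->
  hom_q (of_list (TCst 0) q sg) q q /\ sg = map (of_list (TCst 0) q sg) (vars q).
Proof. by rewrite mem_filter mem_tuples => /andP[? /andP[/eqP ? _]]; rewrite map_of_list. Qed.

Lemma onto_tuplesP q D S l : l \in onto_tuples q D S ->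
  [/\ sat_neq id (of_list 0 q l) q, img (of_list 0 q l) q = S &
      l = map (of_list 0 q l) (vars q)].
Proof.
rewrite mem_filter mem_tuples hom_dbE => /andP[/andP[/andP[_ ?] /eqP ?] /andP[/eqP ? _]].
by rewrite map_of_list.
Qed.

Lemma mem_aut_tuples cs q s : canonical cs q -> hom_q s q q -> map s (vars q) \in aut_tuples q.
Proof.
move=> cq endo; have E : {in vars q, of_list (TCst 0) q (map s (vars q)) =1 s}.
  by move=> x; apply: of_list_map.
rewrite mem_filter /hom_q (eq_in_is_hom _ _ E) -/(hom_q s q q) endo mem_tuples size_map eqxx /=.
apply/allP => t /mapP[x xV ->]; have [v vV ->] := endo_var cq endo xV.
by rewrite inE /terms mem_cat map_f.
Qed.

Lemma mem_onto_tuples cs q h D : canonical cs q -> sat_neq id h q -> img h q `<=` D ->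
  map h (vars q) \in onto_tuples q D (img h q).
Proof.
move=> cq hsat hD; have [_ _ _ safe _] := cq.
have E : {in vars q, of_list 0 q (map h (vars q)) =1 h} by move=> x; apply: of_list_map.
rewrite mem_filter /hom_db (eq_in_is_hom _ _ E) -/(hom_db h q D) hom_dbE (eq_in_img E).
rewrite hD hsat eqxx mem_tuples size_map eqxx /=.
apply/allP => n /mapP[x /safe[a aq xa] ->].
apply: (in_adom (f := inst h a)); first by apply: (fsubsetP hD); rewrite in_img map_f.
exact: (map_f (tmap id h) xa).
Qed.

(* Composing with [h0] and taking preimages under [h0] are mutually inverse
   bijections between the endomorphisms of [q] and the embeddings of [q] onto
   the image of [h0]. *)
Lemma size_onto_tuples cs q h0 D : canonical cs q -> sat_neq id h0 q -> img h0 q `<=` D ->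
  size (onto_tuples q D (img h0 q)) = aut_count q.
Proof.
move=> cq h0sat h0D; have [h0i _] := (canonical_satP _ cq).1 h0sat.
rewrite /aut_count -size_filter -/(aut_tuples q); symmetry.
apply: (size_bij_in (f := map (tmap id h0)) (g := map (TVar \o preim h0 (vars q)))).
- exact/filter_uniq/uniq_tuples/uniq_terms.
- exact/filter_uniq/uniq_tuples/undup_uniq.
- move=> sg /aut_tuplesP[endo ->]; rewrite -map_comp.
  rewrite -[X in onto_tuples _ _ X](img_endo_comp cq h0sat endo).
  apply: (mem_onto_tuples cq (sat_endo_comp cq h0sat endo)).
  by rewrite (img_endo_comp cq h0sat endo).
- move=> l /onto_tuplesP[hsat hE ->]; rewrite -map_comp.
  exact/(mem_aut_tuples cq)/(endo_of_img cq h0sat hsat hE).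
- move=> sg /aut_tuplesP[endo Esg]; rewrite Esg -!map_comp.
  apply/eq_in_map => x xV; have [v vV ev] := endo_var cq endo xV.
  by rewrite /= ev /= preim_inj.
- move=> l /onto_tuplesP[hsat hE El]; rewrite El -!map_comp.
  by apply/eq_in_map => x xV; case: (preimK (img_vars cq hsat hE xV)).
Qed.

Lemma aut_count_gt0 cs q : canonical cs q -> 0 < aut_count q.
Proof.
move=> cq; have [_ _ satE _ _] := cq.
rewrite /aut_count -size_filter -/(aut_tuples q) -has_predT; apply/hasP.
exists (map TVar (vars q)) => //; apply: (mem_aut_tuples cq); apply/andP; split.
  by apply/allP => -[r ts] aq /=; rewrite (_ : map _ ts = ts) // -[RHS]map_id; apply/eq_map => -[].
by apply/satE; split=> // x y _ _ [].
Qed.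

(** * The canonical query of a list of atoms *)

Definition atom_vars (atl : seq ratom) : seq nat :=
  flatten [seq flatten (map tvars a.2) | a <- atl].

Definition canon_cq (cs : seq nat) (atl : seq ratom) : cq :=
  let V := undup (atom_vars atl) in
  (atl, [seq (TVar p.1, TVar p.2) | p <- [seq p <- [seq (x, y) | x <- V, y <- V] | p.1 != p.2]]
        ++ [seq (TVar p.1, TCst p.2) | p <- [seq (x, c) | x <- V, c <- cs]]).

Lemma atom_varsP (atl : seq ratom) x : reflect (exists2 a, a \in atl & TVar x \in a.2) (x \in atom_vars atl).
Proof.
apply: (iffP flatten_mapP) => -[a aa xa]; exists a => //.
  by move: xa => /flatten_mapP[t ta]; rewrite mem_tvars => /eqP <-.
by apply/flatten_mapP; exists (TVar x); rewrite ?mem_tvars.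
Qed.

Lemma vars_canon_cq cs atl : vars (canon_cq cs atl) =i atom_vars atl.
Proof.
move=> x; rewrite /vars mem_undup mem_cat; apply/orP/idP => [[] //|]; last by left.
case/flatten_mapP => p; rewrite /natoms /= mem_cat => /orP[] /mapP[[y z]].
  rewrite mem_filter => /andP[_ /allpairsP[[u v] /= [uV vV [-> ->]]]] -> /=.
  by rewrite !inE => /orP[] /eqP ->; rewrite -mem_undup.
move=> /allpairsP[[u v] /= [uV vV [-> ->]]] -> /=.
by rewrite ?cats0 inE => /eqP ->; rewrite -mem_undup.
Qed.

Lemma canonical_canon_cq (cs : seq nat) (atl : seq ratom) : uniq atl ->
  (forall a c, a \in atl -> TCst c \in a.2 -> c \in cs) -> canonical cs (canon_cq cs atl).
Proof.
move=> ua ca; set q := canon_cq cs atl.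
have qV : vars q =i atom_vars atl := vars_canon_cq cs atl.
split => //.
- move=> a aq; apply/allP => -[x|c] ta /=; first exact: (mem_vars_ratom aq ta).
  exact: ca ta.
- move=> T emb h; rewrite /sat_neq all_cat; split.
    case/andP => /allP neqV /allP neqC; split.
      move=> x y; rewrite !qV => xV yV hxy; apply/eqP/negPn/negP => nxy.
      suff : h x != h y by rewrite hxy eqxx.
      apply: (neqV (TVar x, TVar y)); apply/mapP; exists (x, y) => //.
      by rewrite mem_filter nxy /=; apply/allpairsP; exists (x, y); rewrite !mem_undup.
    move=> x; rewrite qV => xV c cc.
    apply: (neqC (TVar x, TCst c)); apply/mapP; exists (x, c) => //.
    by apply/allpairsP; exists (x, c); rewrite mem_undup.
  case=> hi hc; apply/andP; split; apply/allP => p /mapP[[x y]].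
    rewrite mem_filter => /andP[/= nxy /allpairsP[[u v] /= [uV vV [ex ey]]]] -> /=.
    subst; apply: contra nxy => /eqP/hi-> //; by rewrite qV -mem_undup.
  move=> /allpairsP[[u v] /= [uV vV [ex ey]]] -> /=; subst.
  by apply: hc => //; rewrite qV -mem_undup.
- by move=> x; rewrite qV => /atom_varsP.
- move=> c; rewrite /csts mem_undup mem_cat => /orP[].
    case/flatten_mapP => a aq /flatten_mapP[t ta]; rewrite mem_tcsts => /eqP et.
    by apply: (ca a); rewrite // -et.
  case/flatten_mapP => p; rewrite /natoms /= mem_cat => /orP[] /mapP[[y z]].
    by move=> _ -> /=.
  by move=> /allpairsP[[u v] /= [uV vV [-> ->]]] -> /=; rewrite inE => /eqP ->.
Qed.

Lemma size_natoms_canon_cq cs atl :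
  size (natoms (canon_cq cs atl)) <= size (undup (atom_vars atl)) ^ 2
                                     + size (undup (atom_vars atl)) * size cs.
Proof.
rewrite /natoms /= size_cat !size_map size_allpairs leq_add2r size_filter.
by rewrite (leq_trans (count_size _ _)) // size_allpairs.
Qed.

Lemma rename_img cs q g h : canonical cs q -> {in cs, g =1 id} ->
  rename_db g (img h q) = img (g \o h) q.
Proof.
case=> _ qW _ _ _ gid.
have gE a : a \in ratoms q -> rename_fact g (inst h a) = inst (g \o h) a.
  move=> aq; rewrite /rename_fact /inst /= -map_comp; congr (_, _).
  by apply/eq_in_map => -[x|c] //= ca; rewrite gid //; have := allP (qW a aq) _ ca.
apply/fsetP => f; rewrite in_rename_db in_img; apply/mapP/mapP.
  by case=> f'; rewrite in_img => /mapP[a aq ->] ->; exists a; rewrite ?gE.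
by case=> a aq ->; exists (inst h a); rewrite ?gE ?in_img ?map_f.
Qed.

Lemma sat_rename cs q h g g' : canonical cs q -> sat_neq id h q -> cancel g g' ->
  {in cs, g =1 id} -> sat_neq id (g \o h) q.
Proof.
move=> cq /(canonical_satP _ cq) [hi hc] K gid; apply/(canonical_satP _ cq); split.
  by move=> x y xV yV /(can_inj K) /hi; apply.
move=> x xV /=; apply: contra (hc x xV) => ghc.
by rewrite -(K (h x)) -(gid _ ghc) K.
Qed.

Lemma img_renaming cs q h1 h2 : canonical cs q -> sat_neq id h1 q -> sat_neq id h2 q ->
  exists g g', [/\ cancel g g', cancel g' g, {in cs, g =1 id} &
                   img h2 q = rename_db g (img h1 q)].
Proof.
move=> cq /(canonical_satP _ cq) [i1 c1] /(canonical_satP _ cq) [i2 c2].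
have [g [g' [K K' gid E]]] := exists_renaming (uniq_vars q) i1 i2 c1 c2.
by exists g, g'; split; rewrite // (rename_img _ cq) //; apply: eq_in_img => x /E.
Qed.

Definition has_image (q : cq) (S : database) : Prop :=
  exists2 h, sat_neq id h q & img h q = S.

Definition share_image (q q' : cq) : Prop := exists S, has_image q S /\ has_image q' S.

Lemma share_has_image cs q q' S : canonical cs q -> canonical cs q' ->
  share_image q q' -> has_image q S -> has_image q' S.
Proof.
move=> cq cq' [_ [[h hsat <-] [h' h'sat E]]] [h2 h2sat <-].
have [g [g' [K K' gid ->]]] := img_renaming cq hsat h2sat.
exists (g \o h'); first exact: (sat_rename cq').
by rewrite -(rename_img _ cq') // E.
Qed.

Lemma minimal_model_image Qt S : minimal_model Qt S ->
  exists2 q, q \in Qt & exists2 h, hom_db h q S & img h q = S.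
Proof.
case=> [[q qQ [h hS]]] minS; exists q => //; exists h => //.
move: (hS); rewrite hom_dbE => /andP[sub hsat].
apply/eqP; apply: contraT => ne; case: (minS (img h q)); first by rewrite fproperEneq ne.
by exists q => //; exists h; rewrite hom_dbE fsubset_refl.
Qed.

Definition db_weight (S : database) : nat := \sum_(f <- enum_fset S) (size f.2).+1.

Lemma db_weight_img h q : db_weight (img h q) <= cq_size q.
Proof.
have P : perm_eq (enum_fset (img h q)) (undup (map (inst h) (ratoms q))).
  by apply: uniq_perm; rewrite ?fset_uniq ?undup_uniq // => f; rewrite in_img mem_undup.
rewrite /db_weight (perm_big _ P) (leq_trans (leq_sum_undup _ _)) // big_map.
by rewrite /cq_size (leq_trans _ (leq_addr _ _)) //; under eq_bigr do rewrite size_map.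
Qed.

(** * Abstracting a database into a canonical query *)

Section Abstraction.
Variables (cs : seq nat) (S : database).

Definition fresh_elems : seq nat :=
  undup [seq n <- flatten (map snd (enum_fset S)) | n \notin cs].

Definition abstract_term (n : nat) : term :=
  if n \in cs then TCst n else TVar (index n fresh_elems).

Definition abstract_fact (f : fact) : ratom := (f.1, map abstract_term f.2).

Definition abstract_db : seq ratom := map abstract_fact (enum_fset S).

Definition concretize (x : nat) : nat := nth 0 fresh_elems x.

Lemma mem_fresh_elems f n : f \in S -> n \in f.2 -> n \notin cs -> n \in fresh_elems.
Proof. by move=> fS nf ncs; rewrite mem_undup mem_filter ncs; apply/flatten_mapP; exists f. Qed.

Lemma inst_abstract_fact f : f \in S -> inst concretize (abstract_fact f) = f.
Proof.
case: f => r ns fS; rewrite /inst /abstract_fact /= -map_comp; congr (_, _).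
rewrite -[RHS]map_id; apply/eq_in_map => n nf /=; rewrite /abstract_term.
by case: ifPn => //= ncs; rewrite /concretize nth_index // (mem_fresh_elems fS).
Qed.

Lemma size_fresh_elems : size fresh_elems <= db_weight S.
Proof.
rewrite (leq_trans (size_undup _)) // size_filter (leq_trans (count_size _ _)) //.
exact: size_flatten_map_le.
Qed.

Lemma uniq_abstract_db : uniq abstract_db.
Proof.
rewrite map_inj_in_uniq ?fset_uniq // => f1 f2 f1S f2S E.
by rewrite -(inst_abstract_fact f1S) E inst_abstract_fact.
Qed.

Lemma abstract_db_cst a c : a \in abstract_db -> TCst c \in a.2 -> c \in cs.
Proof.
case/mapP => f _ -> /mapP[n _]; rewrite /abstract_term.
by case: ifP => // ncs [->].
Qed.

Let q := canon_cq cs abstract_db.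

Lemma vars_abstract_db x : x \in vars q -> x < size fresh_elems.
Proof.
rewrite vars_canon_cq => /atom_varsP[a /mapP[f fS ->] /mapP[n nf]].
by rewrite /abstract_term; case: ifPn => // ncs [->]; rewrite index_mem (mem_fresh_elems fS).
Qed.

Lemma canonical_abstract_db : canonical cs q.
Proof. exact: (canonical_canon_cq uniq_abstract_db abstract_db_cst). Qed.

Lemma sat_concretize : sat_neq id concretize q.
Proof.
apply/(canonical_satP _ canonical_abstract_db); split.
  move=> x y /vars_abstract_db xF /vars_abstract_db yF /eqP.
  by rewrite /concretize nth_uniq ?undup_uniq // => /eqP.
move=> x /vars_abstract_db xF; have : concretize x \in fresh_elems by apply: mem_nth.
by rewrite mem_undup mem_filter => /andP[].
Qed.

Lemma img_concretize : img concretize q = S.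
Proof.
apply/fsetP => f; rewrite in_img /ratoms /= -map_comp.
have -> // : map (inst concretize \o abstract_fact) (enum_fset S) = enum_fset S.
by rewrite -[RHS]map_id; apply/eq_in_map => g /inst_abstract_fact.
Qed.

End Abstraction.

Lemma hom_count_canonical cs q D : canonical cs q ->
  hom_count q D = aut_count q * count (fun S => `[< has_image q S >]) (enum_fset (fpowerset D)).
Proof.
move=> cq; rewrite /hom_count (count_sum_fibers (f := fun l => img (of_list 0 q l) q)
  (fset_uniq (fpowerset D))); last first.
  by move=> l _; rewrite hom_dbE fpowersetE => /andP[].
rewrite -sum_nat_bool big_distrr; apply: eq_big_seq => S; rewrite fpowersetE => SD /=.
case: asboolP => [[h hsat hS]|noS].
  by rewrite muln1 -size_filter -hS (size_onto_tuples cq hsat) // hS.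
rewrite muln0; apply/eqP; rewrite -leqn0 leqNgt -has_count; apply/hasP => -[l _].
by case/andP; rewrite hom_dbE => /andP[_ lsat] /eqP lS; apply: noS; exists (of_list 0 q l).
Qed.

(** * The family of representative queries *)

Section Family.
Variables (Qt : ucq) (k : nat).

Local Notation cs := (ucq_csts Qt).
Local Notation n := (ucq_size Qt).

(* Every minimal support is the image of one of its disjuncts, so it has at
   most [n] facts and at most [n] elements outside [cs]: it is the image of a
   canonical query built from these atoms. *)
Definition term_pool : seq term := map TVar (iota 0 n) ++ map TCst cs.

Definition atom_pool : seq ratom :=
  flatten [seq [seq (a.1, ts) | ts <- tuples term_pool (size a.2)]
          | a <- flatten (map ratoms Qt)].

Definition atom_lists : seq (seq ratom) :=
  [seq atl <- tuples atom_pool k | uniq atl && (\sum_(a <- atl) (size a.2).+1 <= n)].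

Definition candidates : seq cq := map (canon_cq cs) atom_lists.

Definition shapes : seq cq :=
  undup [seq q <- candidates | `[< exists2 h, sat_neq id h q & minimal_model Qt (img h q) >]].

(* Shapes sharing an image have the same images, so keeping the first shape of
   each class makes every minimal support the image of exactly one query. *)
Definition representatives : seq cq :=
  [seq q <- shapes | `[< forall q', q' \in shapes -> index q' shapes < index q shapes ->
                          ~ share_image q q' >]].

Lemma atom_pool_cst a c : a \in atom_pool -> TCst c \in a.2 -> c \in cs.
Proof.
case/flatten_mapP => b _ /mapP[ts]; rewrite mem_tuples => /andP[_ /allP tsP] -> /= cts.
have : TCst c \in term_pool by apply: tsP.
by rewrite mem_cat => /orP[] /mapP[x xcs] // [->].
Qed.

Lemma canonical_candidate q : q \in candidates -> canonical cs q.
Proof.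
case/mapP => atl; rewrite mem_filter mem_tuples => /and3P[/andP[ua _] _ /allP atlP] ->.
by apply: canonical_canon_cq => // a c /atlP; apply: atom_pool_cst.
Qed.

Lemma size_candidate q : q \in candidates -> size (ratoms q) = k.
Proof. by case/mapP => atl; rewrite mem_filter mem_tuples => /and3P[_ /eqP ? _] ->. Qed.

Lemma shape_candidate q : q \in shapes -> q \in candidates.
Proof. by rewrite mem_undup mem_filter => /andP[]. Qed.

Lemma representative_shape q : q \in representatives -> q \in shapes.
Proof. by rewrite mem_filter => /andP[]. Qed.

Lemma shape_image q S : q \in shapes -> has_image q S -> minimal_model Qt S /\ #|` S| = k.
Proof.
move=> qs [h hsat <-]; have qc := shape_candidate qs; have cq := canonical_candidate qc.
split; last by rewrite (card_img cq hsat) size_candidate.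
move: qs; rewrite mem_undup mem_filter => /andP[/asboolP [h1 h1sat min1] _].
have [g [g' [K K' gid ->]]] := img_renaming cq h1sat hsat.
exact: (minimal_model_rename K K').
Qed.

Lemma abstract_db_atom_list S : minimal_model Qt S -> #|` S| = k ->
  abstract_db cs S \in atom_lists.
Proof.
move=> mS cardS; have [q0 q0Q [h0 _ h0S]] := minimal_model_image mS.
have wS : db_weight S <= n.
  by rewrite -h0S (leq_trans (db_weight_img _ _)) // (leq_sum_mem cq_size q0Q).
rewrite mem_filter mem_tuples size_map -cardS eqxx uniq_abstract_db /=.
apply/andP; split; first by rewrite big_map; under eq_bigr do rewrite size_map.
apply/allP => _ /mapP[f fS ->].
have : f \in img h0 q0 by rewrite h0S.
rewrite in_img => /mapP[a0 a0q ef]; apply/flatten_mapP; exists a0.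
  by apply/flatten_mapP; exists q0.
apply/mapP; exists (map (abstract_term cs S) f.2); last by rewrite /abstract_fact ef.
rewrite mem_tuples ef !size_map eqxx /=; apply/allP => _ /mapP[m mf ->].
rewrite inE /abstract_term; case: ifPn => mcs; first by rewrite mem_cat map_f ?orbT.
rewrite mem_cat map_f // mem_iota (leq_trans _ wS) // (leq_trans _ (size_fresh_elems cs S)) //.
by rewrite index_mem (mem_fresh_elems fS) // ef.
Qed.

Lemma exists_shape S : minimal_model Qt S -> #|` S| = k -> exists2 q, q \in shapes & has_image q S.
Proof.
move=> mS cardS; set q := canon_cq cs (abstract_db cs S).
have qc : q \in candidates by apply/map_f/abstract_db_atom_list.
exists q; last by exists (concretize cs S); rewrite ?sat_concretize ?img_concretize.
rewrite mem_undup mem_filter qc andbT; apply/asboolP.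
by exists (concretize cs S); rewrite ?sat_concretize ?img_concretize.
Qed.

Lemma count_representatives S :
  count (fun q => `[< has_image q S >]) representatives =
  `[< minimal_model Qt S >] && (#|` S| == k).
Proof.
have us : uniq shapes by apply: undup_uniq.
case: (boolP (_ && _)) => [/andP[/asboolP mS /eqP cardS]|noS]; last first.
  apply/eqP; rewrite -leqn0 leqNgt -has_count; apply/hasP => -[q /representative_shape qs].
  move=> /asboolP /(shape_image qs) [mS cardS]; move/negP: noS; apply.
  by rewrite cardS eqxx andbT; apply/asboolP.
apply: count_uniq_eq1; first exact/filter_uniq.
  move=> q q' /[dup] qr /representative_shape qs /[dup] q'r /representative_shape q's.
  move=> /asboolP qS /asboolP q'S.
  have [lt|lt|/(congr1 (nth q shapes))] := ltngtP (index q shapes) (index q' shapes).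
  - by move: q'r; rewrite mem_filter => /andP[/asboolP /(_ q qs lt)[]]; exists S.
  - by move: qr; rewrite mem_filter => /andP[/asboolP /(_ q' q's lt)[]]; exists S.
  - by rewrite !nth_index.
have [q0 q0s q0S] := exists_shape mS cardS.
have ex : exists i, (i < size shapes) && `[< has_image (nth q0 shapes i) S >].
  by exists (index q0 shapes); rewrite index_mem q0s nth_index //=; apply/asboolP.
case: (ex_minnP ex) => i /andP[ishapes /asboolP iS] imin.
have qis : nth q0 shapes i \in shapes by apply: mem_nth.
apply/hasP; exists (nth q0 shapes i); last exact/asboolP.
rewrite mem_filter qis andbT; apply/asboolP => q' q's; rewrite index_uniq // => lt share.
suff : i <= index q' shapes by rewrite leqNgt lt.
apply: imin; rewrite index_mem q's nth_index //=; apply/asboolP.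
by apply: (share_has_image _ _ share iS); apply/canonical_candidate/shape_candidate.
Qed.

Lemma size_ucq_csts : size cs <= n.
Proof.
apply: size_flatten_map_le => q.
rewrite (leq_trans (size_undup _)) // size_cat /cq_size leq_add //.
  apply: size_flatten_map_le => a; rewrite (leq_trans _ (leqnSn _)) //.
  by rewrite (leq_trans (size_flatten_map_le (g := fun=> 1) _ _)) ?sum1_size // => -[].
apply: leq_trans (size_flatten_map_le (g := fun=> 3) _ _) _ => [[[x|c] [y|d]] //|].
by rewrite big_const_seq count_predT iter_addn_0 mulnC.
Qed.

Lemma cq_size_candidate q : q \in candidates -> cq_size q <= 7 * n.+1 ^ 2.
Proof.
case/mapP => atl; rewrite mem_filter mem_tuples => /andP[/andP[_ wt] /andP[_ /allP atlP]] ->.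
have sV : size (undup (atom_vars atl)) <= n.
  rewrite -(size_iota 0 n); apply: uniq_leq_size; first exact: undup_uniq.
  move=> x; rewrite mem_undup => /atom_varsP [a /atlP /flatten_mapP[b _ /mapP[ts]]].
  rewrite mem_tuples => /andP[_ /allP tsP] -> /= /tsP.
  by rewrite inE mem_cat => /orP[] /mapP[y yin] // [->].
have := size_natoms_canon_cq (ucq_csts Qt) atl; have := size_ucq_csts.
rewrite /cq_size /ratoms /=; move: wt sV.
set w := \sum_(_ <- _) _; set v := size _; set s := size _; set m := size _ => *.
nia.
Qed.

End Family.

Lemma FMS_count Qt k D :
  FMS Qt k D = count (fun S => `[< minimal_model Qt S >] && (#|` S| == k))
                     (enum_fset (fpowerset D)).
Proof.
rewrite /FMS -size_filter -(undup_id (filter_uniq _ (fset_uniq _))) -card_fseq.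
congr (size (enum_fset _)); apply/fsetP => S; rewrite !inE mem_filter andbC.
case SD: (S \in fpowerset D); rewrite ?andbF // !andbT; congr (_ && _).
move: SD; rewrite fpowersetE => SD.
by apply/asboolP/asboolP => [[_ ? ?]|[? ?]]; split.
Qed.

Import GRing.Theory Num.Theory.
Local Open Scope ring_scope.

Theorem theorem2 :
  exists C : nat,
  forall (Qt : ucq) (k : nat),
  exists Qs : seq cq,
    [/\ uniq Qs,
        (forall q, q \in Qs -> [/\ safe q, (0 < aut_count q)%N &
                                 (cq_size q <= C * (ucq_size Qt).+1 ^ 2)%N]) &
        forall D : database,
          (FMS Qt k D)%:R =
          \sum_(q <- Qs) ((hom_count q D)%:R / (aut_count q)%:R : rat)].
Proof.
exists 7%N => Qt k; exists (representatives Qt k).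
have qc q : q \in representatives Qt k -> q \in candidates Qt k.
  by move=> /representative_shape /shape_candidate.
have cq q : q \in representatives Qt k -> canonical (ucq_csts Qt) q.
  by move=> /qc /canonical_candidate.
split=> [|q qr|D].
- exact/filter_uniq/undup_uniq.
- by split; [exact: canonical_safe (cq q qr) | exact: aut_count_gt0 (cq q qr)
                | exact: cq_size_candidate (qc q qr)].
rewrite FMS_count -sum_nat_bool.
under eq_bigr do rewrite -count_representatives -sum_nat_bool.
rewrite exchange_big natr_sum; apply: eq_big_seq => q qr.
rewrite (hom_count_canonical _ (cq q qr)) sum_nat_bool natrM [X in _ = X / _]mulrC mulfK //.
by rewrite pnatr_eq0 -lt0n (aut_count_gt0 (cq q qr)).
Qed.
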